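(* Let $p,n\in\mathbb N$ with $p\ge n\ge 10$ and $p=k(n-1)+n-6$ for some $k\in\mathbb N$. Then $$\mathrm{ex}(p;T_n^3)=\frac{(n-2)p-5(n-6)}2.$$
   Context: All graphs are finite simple graphs. For a graph $L$, $\mathrm{ex}(p;L)$ denotes the maximum number of edges in a graph on $p$ vertices that contains no subgraph isomorphic to $L$. For $n\ge 6$, $T_n^3$ is the tree on vertex set $\{v_0,\ldots,v_{n-1}\}$ with edge set $\{v_0v_1,v_0v_2,\ldots,v_0v_{n-4},\ v_1v_{n-3},\ v_1v_{n-2},\ v_1v_{n-1}\}$. $\mathbb N=\{1,2,\ldots\}$. *)

From mathcomp Require Import all_boot.
Set Implicit Arguments. Unset Strict Implicit. Unset Printing Implicit Defensive.

Definition is_graph (v : nat) (E : {set {set 'I_v}}) : bool :=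
  [forall e in E, #|e| == 2].

Definition contains (p m : nat) (G : {set {set 'I_p}}) (L : {set {set 'I_m}}) : bool :=
  [exists f : {ffun 'I_m -> 'I_p}, injectiveb f && [forall e in L, (f @: e) \in G]].

Definition ex (p m : nat) (L : {set {set 'I_m}}) : nat :=
  \max_(G : {set {set 'I_p}} | is_graph G && ~~ contains G L) #|G|.

(* Edges of T_n^3, vertices v_i identified with i : 'I_n:
   v0 v_i for 1 <= i <= n-4, and v1 v_j for n-3 <= j <= n-1. *)
Definition T3edge (n i j : nat) : bool :=
  ((i == 0) && (1 <= j <= n - 4)) || ((i == 1) && (n - 3 <= j <= n - 1)).

Definition T3 (n : nat) : {set {set 'I_n}} :=
  [set e : {set 'I_n} | [exists i : 'I_n, exists j : 'I_n,
     (e == [set i; j]) && T3edge n i j]].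

(* Lower bound: k disjoint copies of K_(n-1) and one K_(n-6) have the stated
   number of edges and contain no T_n^3, which is connected on n vertices.

   Upper bound: by induction on k, a T_n^3-free graph on a vertex set V of size
   k (n - 1) + n - 6 has degree sum at most (n - 2) |V| - 5 (n - 6).  The local
   engine is: if z is a neighbour of x of degree at least 4, then
   deg x + min(3, |N(z) \ N[x]|) <= n - 2, as otherwise T_n^3 embeds with
   v_0 = x and v_1 = z.  Let u have maximum degree D.  If D >= n - 1, the
   neighbours of vertices of degree >= n - 1 have degree <= 3, which pays for
   the excess.  If D = n - 2, deleting the n - 1 vertices of N[u] lowers the
   degree sum by at most (n - 1)(n - 2), and induction applies; if D = n - 3,
   the same holds for N[u] together with a well-chosen vertex outside it.  If
   D = n - 4 and |V| = 2n - 7 a direct count is needed; in all remaining cases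
   the degree bound alone suffices. *)

From mathcomp Require Import all_boot.
From mathcomp Require Import zify.
Set Implicit Arguments. Unset Strict Implicit. Unset Printing Implicit Defensive.

Lemma card_set_predE (T : finType) (A : {set T}) (P : pred T) :
  #|[set y in A | P y]| = \sum_(y in A) P y.
Proof.
rewrite -sum1_card [LHS]big_mkcond [RHS]big_mkcond /=.
by apply: eq_bigr => i _; rewrite !inE; case: (i \in A); case: (P i).
Qed.

Lemma exists_subset_card (T : finType) (A : {set T}) k :
  k <= #|A| -> exists2 B : {set T}, B \subset A & #|B| = k.
Proof.
elim: k => [|k IH] leA; first by exists set0; rewrite ?sub0set ?cards0.
have [B sBA cB] := IH (ltnW leA).
have : #|A :\: B| > 0 by rewrite cardsD (setIidPr sBA); lia.
case/card_gt0P => x; rewrite inE => /andP [xB xA].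
exists (x |: B); first by rewrite subUset sub1set xA sBA.
by rewrite cardsU1 xB cB.
Qed.

Lemma leq_sum_subset (I : finType) (P Q : pred I) (F H : I -> nat) :
  (forall i, P i -> Q i) -> (forall i, P i -> F i <= H i) ->
  \sum_(i | P i) F i <= \sum_(i | Q i) H i.
Proof.
move=> PQ FH; apply: (@leq_trans (\sum_(i | P i) H i)); first exact: leq_sum.
by apply: (sub_le_big (op := addn)) => // x y; rewrite leq_addr.
Qed.

Lemma sum_leq_const (I : finType) (S : {set I}) (F : I -> nat) d :
  (forall x, x \in S -> F x <= d) -> \sum_(x in S) F x <= d * #|S|.
Proof. by move=> H; rewrite mulnC -sum_nat_const; apply: leq_sum. Qed.

Section Neighbourhoods.
Variables (p : nat) (G : {set {set 'I_p}}).
Hypothesis HG : is_graph G.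
Implicit Types (V A S X Y : {set 'I_p}) (x y z u : 'I_p).

Definition adj (x y : 'I_p) : bool := [set x; y] \in G.

Definition nbhd (V : {set 'I_p}) x := [set y in V | adj x y].
Definition deg (V : {set 'I_p}) x := #|nbhd V x|.
Definition cnbhd (V : {set 'I_p}) x := x |: nbhd V x.

Lemma adjC x y : adj x y = adj y x.
Proof. by rewrite /adj setUC. Qed.

Lemma adjxx x : adj x x = false.
Proof.
apply/negbTE/negP => Gx; move/forall_inP: HG => /(_ _ Gx).
by rewrite setUid cards1.
Qed.

Lemma adj_neq x y : adj x y -> x != y.
Proof. by apply: contraTneq => ->; rewrite adjxx. Qed.

Lemma in_nbhd V x y : (y \in nbhd V x) = (y \in V) && adj x y.
Proof. by rewrite inE. Qed.

Lemma nbhd_sub V x : nbhd V x \subset V.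
Proof. by apply/subsetP => y; rewrite in_nbhd => /andP []. Qed.

Lemma notin_nbhd V x : x \notin nbhd V x.
Proof. by rewrite in_nbhd adjxx andbF. Qed.

Lemma deg_lt_card V x : x \in V -> deg V x < #|V|.
Proof.
move=> xV; apply: proper_card; apply/properP; split; first exact: nbhd_sub.
by exists x => //; rewrite notin_nbhd.
Qed.

Lemma card_cnbhd V x : #|cnbhd V x| = (deg V x).+1.
Proof. by rewrite /cnbhd cardsU1 notin_nbhd. Qed.

Lemma cnbhd_sub V x : x \in V -> cnbhd V x \subset V.
Proof. by move=> xV; rewrite /cnbhd subUset sub1set xV nbhd_sub. Qed.

Lemma cnbhd_subP V u x : u \in V -> x \in cnbhd V u -> x \in V.
Proof. by move=> uV; apply: subsetP; apply: cnbhd_sub. Qed.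

Lemma nbhd_sub_cnbhd V u x : x \in nbhd V u -> x \in cnbhd V u.
Proof. exact: setU1r. Qed.

Lemma in_cnbhd_neq V u x : x \in cnbhd V u -> x != u -> x \in nbhd V u.
Proof. by rewrite !inE => /orP [/eqP -> | ->]; rewrite ?eqxx. Qed.

Lemma card_nbhdI_le V S x : #|nbhd V x :&: S| <= deg V x.
Proof. exact/subset_leq_card/subsetIl. Qed.

Lemma nbhdI_sub V Y x : Y \subset V -> nbhd V x :&: Y = [set y in Y | adj x y].
Proof.
move=> sYV; apply/setP => y; rewrite !inE.
case yY: (y \in Y); last by rewrite andbF.
by rewrite (subsetP sYV _ yY) andbT.
Qed.

Lemma nbhdI_setD_cnbhd V u z :
  nbhd V z :&: (V :\: cnbhd V u) = nbhd V z :\: nbhd V u :\ u.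
Proof.
apply/setP => w; rewrite !inE negb_or.
by case: (w \in V); case: (w != u); case: (adj z w); case: (adj u w).
Qed.

Lemma deg_setID V A x : deg V x = #|nbhd V x :&: A| + #|nbhd V x :&: (V :\: A)|.
Proof.
rewrite /deg -(cardsID A (nbhd V x)); congr (_ + _).
by apply: eq_card => y; rewrite !inE; case: (y \in A); case: (y \in V); case: (adj x y).
Qed.

Lemma sum_card_nbhdI_sym V X Y : X \subset V -> Y \subset V ->
  \sum_(x in X) #|nbhd V x :&: Y| = \sum_(y in Y) #|nbhd V y :&: X|.
Proof.
move=> sXV sYV.
rewrite (eq_bigr (fun x => \sum_(y in Y) adj x y)); last first.
  by move=> x _; rewrite nbhdI_sub // card_set_predE.
rewrite [RHS](eq_bigr (fun y => \sum_(x in X) adj y x)); last first.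
  by move=> y _; rewrite nbhdI_sub // card_set_predE.
by rewrite exchange_big /=; apply: eq_bigr => y _; apply: eq_bigr => x _; rewrite adjC.
Qed.

(* The drop in the degree sum when the vertices of S are deleted from V. *)
Definition deg_loss V S := \sum_(x in S) (deg V x + #|nbhd V x :&: (V :\: S)|).

Lemma sum_deg_setD V S : S \subset V ->
  \sum_(x in V) deg V x = \sum_(x in V :\: S) deg (V :\: S) x + deg_loss V S.
Proof.
move=> sSV; rewrite /deg_loss.
rewrite (big_setID S) /= (setIidPr sSV) big_split /= addnCA; congr (_ + _).
have degE x : deg V x = #|nbhd V x :&: S| + deg (V :\: S) x.
  rewrite (deg_setID V S x); congr (_ + _); apply: eq_card => y.
  by rewrite !inE; case: (y \in S); case: (y \in V); case: (adj x y).
rewrite (eq_bigr _ (fun x _ => degE x)) big_split /= addnC; congr (_ + _).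
by rewrite sum_card_nbhdI_sym // subsetDl.
Qed.

Lemma handshake : \sum_(x in [set: 'I_p]) deg [set: 'I_p] x = 2 * #|G|.
Proof.
have degE x : deg [set: 'I_p] x = #|[set e in G | x \in e]|.
  have -> : [set e in G | x \in e] = (fun y => [set x; y]) @: nbhd [set: 'I_p] x.
    apply/setP => e; apply/idP/idP.
    - rewrite inE => /andP [eG xe].
      move/forall_inP: HG => /(_ e eG) /cards2P [a [b [ab Ee]]].
      move: xe; rewrite Ee !inE => /orP [/eqP xa | /eqP xb].
      + apply/imsetP; exists b; last by rewrite xa.
        by rewrite in_nbhd in_setT /adj xa -Ee.
      + apply/imsetP; exists a; last by rewrite xb setUC.
        by rewrite in_nbhd in_setT /adj xb setUC -Ee.
    - case/imsetP => y; rewrite in_nbhd in_setT /= => axy ->.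
      by rewrite inE; apply/andP; split; [exact: axy | rewrite !inE eqxx].
  rewrite card_in_imset // => y1 y2; rewrite !in_nbhd !in_setT /= => a1 _ E.
  have : y1 \in [set x; y2] by rewrite -E !inE eqxx orbT.
  by rewrite !inE => /orP [/eqP y1x | /eqP //]; move: a1; rewrite y1x adjxx.
rewrite (eq_bigr _ (fun x _ => degE x)).
rewrite (eq_bigr (fun x => \sum_(e in G) (x \in e))); last first.
  by move=> x _; rewrite card_set_predE.
rewrite exchange_big /= mulnC -sum_nat_const; apply: eq_bigr => e eG.
rewrite -(card_set_predE [set: 'I_p] (mem e)).
rewrite (_ : [set y in [set: 'I_p] | y \in e] = e); last by apply/setP => y; rewrite !inE.
by move/forall_inP: HG => /(_ e eG) /eqP.
Qed.

End Neighbourhoods.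

Section T3Free.
Variables (p : nat) (G : {set {set 'I_p}}).
Hypothesis HG : is_graph G.
Variable n : nat.
Hypothesis n10 : 10 <= n.
Implicit Types (V S : {set 'I_p}) (x y z u : 'I_p).

Local Notation adj := (adj G).
Local Notation nbhd := (nbhd G).
Local Notation deg := (deg G).
Local Notation cnbhd := (cnbhd G).
Local Notation deg_loss := (deg_loss G).
Local Notation adjxx := (adjxx HG).

(* Lay out x, z, the n - 5 vertices of L and the three vertices of Z3 as
   v_0, v_1, v_2 .. v_(n-4), v_(n-3) .. v_(n-1). *)
Lemma contains_T3 x z (Z3 L : {set 'I_p}) :
  adj x z -> #|Z3| = 3 -> (forall w, w \in Z3 -> adj z w && (w != x)) ->
  (forall w, w \in L -> [&& adj x w, w != z & w \notin Z3]) -> n - 5 <= #|L| ->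
  contains G (T3 n).
Proof.
move=> axz cZ3 HZ HL cL.
set t := take (n - 5) (enum L).
set s := [:: x, z & t] ++ enum Z3.
have st : size t = n - 5 by rewrite /t size_takel // -cardE.
have ss : size s = n by rewrite /s size_cat /= st -cardE cZ3; lia.
have tL w : w \in t -> w \in L by move/mem_take; rewrite mem_enum.
have us : uniq s.
  rewrite /s /= cat_uniq take_uniq ?enum_uniq // andbT.
  have xt : x \notin t by apply/negP => /tL /HL; rewrite adjxx.
  have xZ : x \notin enum Z3 by rewrite mem_enum; apply/negP => /HZ; rewrite eqxx andbF.
  have zt : z \notin t by apply/negP => /tL /HL; rewrite eqxx andbF.
  have zZ : z \notin enum Z3 by rewrite mem_enum; apply/negP => /HZ; rewrite adjxx.
  apply/and4P; split => //.
  - by rewrite in_cons mem_cat !negb_or (adj_neq HG axz) xt xZ.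
  - by rewrite mem_cat negb_or zt zZ.
  - apply/hasPn => w; rewrite mem_enum => wZ; apply/negP => /tL /HL.
    by rewrite wZ !andbF.
apply/existsP; exists [ffun i : 'I_n => nth x s i]; apply/andP; split.
  apply/injectiveP => i j; rewrite !ffunE => /eqP.
  by rewrite nth_uniq ?ss ?ltn_ord // => /eqP /val_inj.
apply/forall_inP => e; rewrite inE => /existsP [i /existsP [j /andP [/eqP -> Tij]]].
rewrite imsetU1 imset_set1 !ffunE.
change (adj (nth x s i) (nth x s j)).
case/orP: Tij => /andP [/eqP -> /andP [j1 j2]] /=.
- have -> : nth x s j = nth x (z :: t) j.-1.
    by rewrite /s nth_cat /= st ifT; [case: (nat_of_ord j) j1 | lia].
  have : nth x (z :: t) j.-1 \in z :: t by apply: mem_nth => /=; rewrite st; lia.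
  by rewrite inE => /orP [/eqP -> // | /tL /HL /andP []].
- have -> : nth x s j = nth x (enum Z3) (j - (n - 3)).
    by rewrite /s nth_cat /= st ifF; [congr nth; lia | lia].
  have : nth x (enum Z3) (j - (n - 3)) \in enum Z3.
    by apply: mem_nth; rewrite -cardE cZ3; lia.
  by rewrite mem_enum => /HZ /andP [].
Qed.

Definition deg_sum_bound V := \sum_(x in V) deg V x + 5 * (n - 6) <= (n - 2) * #|V|.

Lemma deg_sum_bound_remove V S : S \subset V -> #|S| = n - 1 ->
  deg_loss V S <= (n - 1) * (n - 2) -> deg_sum_bound (V :\: S) -> deg_sum_bound V.
Proof.
rewrite /deg_sum_bound => sSV cS loss IH.
have cV : #|V| = #|V :\: S| + (n - 1).
  by rewrite cardsD (setIidPr sSV) cS subnK // -cS subset_leq_card.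
by rewrite (sum_deg_setD G sSV) cV mulnDr; lia.
Qed.

Lemma deg_sum_bound_of_maxdeg V d : (forall x, x \in V -> deg V x + d <= n - 2) ->
  5 * (n - 6) <= d * #|V| -> deg_sum_bound V.
Proof.
move=> Hd slack; rewrite /deg_sum_bound.
have := sum_leq_const Hd; rewrite big_split sum_nat_const /= mulnC.
by move: slack; move: (\sum_(x in V) deg V x) #|V| => s c; lia.
Qed.

Lemma deg_sum_bound_small V : #|V| = n - 6 -> deg_sum_bound V.
Proof.
move=> cV; apply: (deg_sum_bound_of_maxdeg (d := 5)); last by rewrite cV.
by move=> x xV; have := deg_lt_card HG xV; rewrite cV; move: (deg V x) => a; lia.
Qed.

Hypothesis T3free : ~~ contains G (T3 n).

(* Otherwise three neighbours of z (taken outside N[x] first) and n - 5 further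
   neighbours of x would span a copy of T3 rooted at x and z. *)
Lemma deg_add_private_nbhd V x z : x \in V -> z \in nbhd V x -> 4 <= deg V z ->
  minn 3 #|nbhd V z :\: nbhd V x :\ x| + deg V x <= n - 2.
Proof.
move=> xV zNx dz; rewrite leqNgt; apply/negP => Hbig; apply: (negP T3free).
set P := nbhd V z :\: nbhd V x :\ x in Hbig.
set R := nbhd V z :\ x.
have axz : adj x z by move: zNx; rewrite in_nbhd => /andP [].
have cR : deg V z = 1 + #|R|.
  by rewrite /deg (cardsD1 x (nbhd V z)) in_nbhd xV adjC axz.
have sPR : P \subset R by apply/subsetP => w; rewrite !inE => /andP [-> /andP [_ ->]].
have [P' sP'P cP'] := exists_subset_card (geq_minr 3 #|P|).
have sP'R : P' \subset R := subset_trans sP'P sPR.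
have [R' sR' cR'] : exists2 R' : {set 'I_p}, R' \subset R :\: P' & #|R'| = 3 - #|P'|.
  apply: exists_subset_card; rewrite cardsD (setIidPr sP'R) cP'.
  by move: cR dz; clear; lia.
set Z3 := P' :|: R'.
have dPR : P' :&: R' = set0.
  apply/setP => w; rewrite !inE; apply/negP => /andP [w1 w2].
  by move: (subsetP sR' _ w2); rewrite inE w1.
have cZ3 : #|Z3| = 3 by rewrite /Z3 cardsU dPR cards0 subn0 cR' subnKC // cP' geq_minl.
have sZR : Z3 \subset R by rewrite /Z3 subUset sP'R (subset_trans sR') // subsetDl.
apply: (@contains_T3 x z Z3 (nbhd V x :\: (z |: Z3))) => //.
- move=> w /(subsetP sZR); rewrite !inE => /andP [-> /andP [_ ->]].
  by rewrite andbT.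
- move=> w; rewrite !inE negb_or => /andP [/andP [-> ->] /andP [_ ->]].
  by rewrite andbT.
have sI : nbhd V x :&: (z |: Z3) \subset z |: R'.
  apply/subsetP => w; rewrite !inE => /andP [wN /orP [-> // | /orP [wP | ->]]];
    last by rewrite orbT.
  by move: (subsetP sP'P _ wP); rewrite !inE wN andbF.
have cI : #|z |: R'| <= 1 + #|R'| by rewrite cardsU1; case: (z \in R').
have := subset_leq_card sI; rewrite cardsD; rewrite /deg in Hbig.
move: Hbig cI cR' cP' (geq_minl 3 #|P|); move: (minn 3 _) (#|nbhd V x|).
by move: (#|nbhd V x :&: _|) (#|z |: R'|) (#|R'|) (#|P'|); clear => *; lia.
Qed.

Lemma deg_nbhd_of_high_deg V x z :
  x \in V -> n - 1 <= deg V x -> z \in nbhd V x -> deg V z <= 3.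
Proof.
move=> xV dx zN; rewrite leqNgt; apply/negP => dz.
by have := deg_add_private_nbhd xV zN dz; lia.
Qed.

Lemma card_private_nbhd V x z : x \in V -> z \in nbhd V x -> 4 <= deg V z ->
  n - 4 <= deg V x -> #|nbhd V z :\: nbhd V x :\ x| + deg V x <= n - 2.
Proof. by move=> xV zN dz dx; have := deg_add_private_nbhd xV zN dz; lia. Qed.

(* The vertices of degree >= n - 1 only see vertices of degree <= 3, and there
   are at least n - 1 of those. *)
Lemma deg_sum_bound_high_maxdeg V x0 : x0 \in V -> n - 1 <= deg V x0 -> deg_sum_bound V.
Proof.
move=> x0V dx0; rewrite /deg_sum_bound.
set H := [set x in V | n - 1 <= deg V x].
set Q := [set x in V | deg V x <= 3].
have x0H : x0 \in H by rewrite inE x0V dx0.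
have NH h : h \in H -> nbhd V h \subset Q.
  rewrite inE => /andP [hV dh]; apply/subsetP => z zN.
  by rewrite inE (subsetP (nbhd_sub G V h) _ zN) (deg_nbhd_of_high_deg hV dh zN).
have cQ : n - 1 <= #|Q| by apply: leq_trans dx0 (subset_leq_card (NH _ x0H)).
have sHV : H \subset V by apply/subsetP => x; rewrite inE => /andP [].
have sQV : Q \subset V by apply/subsetP => x; rewrite inE => /andP [].
have sQ : Q \subset V :\: H.
  by apply/subsetP => x; rewrite !inE => /andP [xV dx]; rewrite xV andbT; lia.
have sumH : \sum_(x in H) deg V x <= 3 * #|Q|.
  rewrite (eq_bigr (fun h => #|nbhd V h :&: Q|)); last first.
    by move=> h hH; rewrite /deg (setIidPl (NH h hH)).
  rewrite (sum_card_nbhdI_sym G sHV sQV); apply: (@leq_trans (\sum_(q in Q) deg V q)).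
    by apply: leq_sum => q _; apply: card_nbhdI_le.
  by apply: sum_leq_const => q; rewrite inE => /andP [].
have sumQ : \sum_(x in Q) deg V x <= 3 * #|Q|.
  by apply: sum_leq_const => q; rewrite inE => /andP [].
have sumR : \sum_(x in (V :\: H) :\: Q) deg V x <= (n - 2) * #|(V :\: H) :\: Q|.
  apply: sum_leq_const => x; rewrite !inE => /andP [_ /andP [xH xV]].
  by move: xH; rewrite xV /=; lia.
have cVH : #|V| = #|H| + #|V :\: H| by rewrite -(cardsID H V) (setIidPr sHV).
have cHQ : #|V :\: H| = #|Q| + #|(V :\: H) :\: Q|.
  by rewrite -(cardsID Q (V :\: H)) (setIidPr sQ).
have H0 : 0 < #|H| by apply/card_gt0P; exists x0.
rewrite (big_setID H) /= (setIidPr sHV) [X in _ + X + _](big_setID Q) /= (setIidPr sQ).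
move: sumH sumQ sumR cVH cHQ H0 cQ n10.
move: (\sum_(x in H) _) (\sum_(x in Q) _) (\sum_(x in (V :\: H) :\: Q) _).
move: #|V| #|H| #|V :\: H| #|Q| #|(V :\: H) :\: Q|.
by clear => *; nia.
Qed.

Lemma deg_loss_cnbhd_n2 V u : u \in V -> deg V u = n - 2 ->
  (forall x, x \in V -> deg V x <= n - 2) -> deg_loss V (cnbhd V u) <= (n - 1) * (n - 2).
Proof.
move=> uV du Hd; rewrite /deg_loss.
have cS : #|cnbhd V u| = n - 1 by rewrite (card_cnbhd HG) du; lia.
apply: (@leq_trans (\sum_(x in cnbhd V u) (n - 2))); last by rewrite sum_nat_const cS.
apply: leq_sum => x xS; rewrite nbhdI_setD_cnbhd.
have xV := cnbhd_subP uV xS.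
case: (eqVneq x u) => [-> | xu]; first by rewrite setDv set0D cards0 du addn0.
have xN : x \in nbhd V u by move: xS; rewrite !inE (negbTE xu).
case: (leqP 4 (deg V x)) => dx.
  have := card_private_nbhd uV xN dx; rewrite du => /(_ (leq_sub2l n (isT : 2 <= 4))).
  by have := Hd x xV; move: (deg V x) (#|_ :\: _ :\ _|) => a b; lia.
have : #|nbhd V x :\: nbhd V u :\ u| <= deg V x.
  by apply/subset_leq_card/subsetP => y; rewrite !inE => /andP [_ /andP [_ ->]].
by move: dx; move: (deg V x) (#|_ :\: _ :\ _|) => a b; lia.
Qed.

(* Maximum degree n - 3: N[u] has only n - 2 vertices, so one vertex b outside
   it has to be deleted together with it; b is chosen by looking at the tight
   neighbours of u. *)
Section MaxDegreeNminus3.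
Variables (V : {set 'I_p}) (u : 'I_p).
Hypotheses (uV : u \in V) (du : deg V u = n - 3).
Hypothesis Hd : forall x, x \in V -> deg V x <= n - 3.

Local Notation A := (cnbhd V u).
Local Notation W := (V :\: cnbhd V u).

Lemma card_cnbhd_n3 : #|A| = n - 2.
Proof. by rewrite (card_cnbhd HG) du; lia. Qed.

Lemma nbhd_n3_out_le1 x : x \in nbhd V u -> 4 <= deg V x -> #|nbhd V x :&: W| <= 1.
Proof.
move=> xN dx; rewrite nbhdI_setD_cnbhd.
have := card_private_nbhd uV xN dx; rewrite du => /(_ (leq_sub2l n (isT : 3 <= 4))).
by move: (#|_ :\: _ :\ _|) => a; lia.
Qed.

(* The neighbours of u whose contribution to deg_loss V A exceeds n - 3. *)
Definition tight := [set x in nbhd V u | (deg V x == n - 3) && (#|nbhd V x :&: W| == 1)].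

Lemma tightP x : x \in tight ->
  [/\ x \in nbhd V u, deg V x = n - 3 & #|nbhd V x :&: W| = 1].
Proof. by rewrite inE => /and3P [? /eqP ? /eqP ?]. Qed.

Lemma tight_sub : tight \subset A.
Proof. by apply/subsetP => x /tightP [/nbhd_sub_cnbhd ->]. Qed.

Lemma tight_out x : x \in tight -> exists b, nbhd V x :&: W = [set b].
Proof. by case/tightP => _ _ /eqP /cards1P. Qed.

Lemma deg_loss_cnbhd_vertex x : x \in A ->
  deg V x + #|nbhd V x :&: W| <= n - 3 + (x \in tight).
Proof.
move=> xA; case: (eqVneq x u) => [-> | xu].
  rewrite nbhdI_setD_cnbhd setDv set0D cards0 du; lia.
have xN := in_cnbhd_neq xA xu.
have := Hd (cnbhd_subP uV xA); have := card_nbhdI_le G V W x.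
case: (leqP 4 (deg V x)) => dx; last by move: dx; move: (deg V x) (#|_ :&: _|) => a b; lia.
have := nbhd_n3_out_le1 xN dx; case: (boolP (x \in tight)) => [_ | ]; first by lia.
rewrite inE xN /= => /nandP [/eqP | /eqP];
  by move: (deg V x) (#|_ :&: _|) => a b; lia.
Qed.

Lemma sum_cnbhd_tight : \sum_(x in A) (n - 3 + (x \in tight)) = (n - 3) * (n - 2) + #|tight|.
Proof.
rewrite big_split /= sum_nat_const card_cnbhd_n3 mulnC -card_set_predE.
congr (_ + _); apply: eq_card => x; rewrite inE.
by case xZ: (x \in tight); rewrite ?andbF ?andbT // (subsetP tight_sub _ xZ).
Qed.

Lemma deg_loss_cnbhd_n3 : deg_loss V A <= (n - 3) * (n - 2) + #|tight|.
Proof. by rewrite -sum_cnbhd_tight; exact: leq_sum deg_loss_cnbhd_vertex. Qed.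

Lemma card_tight_nonnbhd c : c \in tight -> #|(A :\ c) :\: nbhd V c| = 1.
Proof.
case/tightP => cN dc oc; have cA := nbhd_sub_cnbhd cN.
rewrite cardsD; have -> : (A :\ c) :&: nbhd V c = nbhd V c :&: A.
  apply/setP => y; rewrite !inE; case: (eqVneq y c) => [-> | _] /=.
    by rewrite adjxx !andbF.
  by rewrite andbC.
have := deg_setID G V A c; rewrite dc oc.
have := cardsD1 c A; rewrite cA card_cnbhd_n3.
by move: (#|nbhd V c :&: A|) (#|A :\ c|) => a b; lia.
Qed.

Lemma tight_nonadj_unique c y1 y2 : c \in tight ->
  y1 \in A -> y1 != c -> ~~ adj c y1 -> y2 \in A -> y2 != c -> ~~ adj c y2 -> y1 = y2.
Proof.
move=> /card_tight_nonnbhd /eq_leq /card_le1_eqP c1 y1A y1c ncy1 y2A y2c ncy2.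
by apply: c1; rewrite in_setD in_setD1 in_nbhd negb_and ?ncy1 ?ncy2 ?orbT ?y1c ?y2c ?y1A ?y2A.
Qed.

Lemma tight_nonadj_exists c : c \in tight -> exists y, [/\ y \in A, y != c & ~~ adj c y].
Proof.
move=> /card_tight_nonnbhd /eqP /cards1P [y Ey].
have : y \in (A :\ c) :\: nbhd V c by rewrite Ey set11.
rewrite in_setD in_setD1 in_nbhd => /andP [nN /andP [yc yA]]; exists y; split => //.
by move: nN; rewrite (cnbhd_subP uV yA).
Qed.

(* Two adjacent tight vertices with distinct neighbours outside A would give z
   two neighbours outside N[c], against card_private_nbhd. *)
Lemma tight_adj_same_out c z t : c \in tight -> z \in tight -> adj c z ->
  t \in A -> adj z t -> ~~ adj c t -> t != c -> nbhd V z :&: W = nbhd V c :&: W.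
Proof.
move=> cZ zZ acz tA azt nact tc; apply/eqP; apply: contraT => Hne.
have [bz Ebz] := tight_out zZ; have [bc Ebc] := tight_out cZ.
have : bz \in nbhd V z :&: W by rewrite Ebz set11.
rewrite inE => /andP [bzN bzW].
have bzNc : bz \notin nbhd V c.
  apply: contra Hne => bzNc; rewrite Ebz Ebc.
  have : bz \in nbhd V c :&: W by rewrite inE bzNc.
  by rewrite Ebc => /set1P ->.
have [cN dc _] := tightP cZ; have [_ dz _] := tightP zZ.
have zNc : z \in nbhd V c by rewrite in_nbhd (cnbhd_subP uV (subsetP tight_sub _ zZ)) acz.
have bzc : bz != c by apply: contraTneq bzW => ->; rewrite inE (nbhd_sub_cnbhd cN).
have bzt : bz != t by apply: contraTneq bzW => ->; rewrite inE tA.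
have m1 : bz \in nbhd V z :\: nbhd V c :\ c by rewrite in_setD1 in_setD bzNc bzN bzc.
have m2 : t \in nbhd V z :\: nbhd V c :\ c.
  by rewrite !inE (negbTE nact) (cnbhd_subP uV tA) azt tc andbF.
have two : 1 < #|nbhd V z :\: nbhd V c :\ c| by apply/card_gt1P; exists bz, t.
have dz4 : 4 <= deg V z by rewrite dz; clear -n10; lia.
have dc4 : n - 4 <= deg V c by rewrite dc; clear -n10; lia.
have := card_private_nbhd (cnbhd_subP uV (nbhd_sub_cnbhd cN)) zNc dz4 dc4.
by rewrite dc; move: two; move: (#|_ :\: _ :\ _|) => a; clear -n10; lia.
Qed.

Lemma tight_common_out b : b \in W -> (forall z, z \in tight -> adj z b) ->
  #|tight| <= #|nbhd V b :&: A|.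
Proof.
move=> bW Hb; apply/subset_leq_card/subsetP => z zZ; have zA := subsetP tight_sub _ zZ.
by rewrite inE in_nbhd (cnbhd_subP uV zA) adjC Hb.
Qed.

Lemma tight_nonadj_pair v w : v \in tight -> w \in tight ->
  nbhd V v :&: W != nbhd V w :&: W -> ~~ adj v w -> tight \subset [set v; w].
Proof.
move=> vZ wZ Hvw navw; have nawv : ~~ adj w v by rewrite adjC.
have wv : w != v by apply: contraNneq Hvw => ->.
have ZA z : z \in tight -> z \in A := subsetP tight_sub z.
apply/subsetP => z zZ; rewrite !inE; apply/negPn/negP => /norP [zv zw].
have avz : adj v z.
  apply: contraNT zw => navz; apply/eqP.
  exact: tight_nonadj_unique vZ (ZA z zZ) zv navz (ZA w wZ) wv navw.
have awz : adj w z.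
  apply: contraNT zv => nawz; apply/eqP.
  by apply: tight_nonadj_unique wZ (ZA z zZ) zw nawz (ZA v vZ) _ nawv; rewrite eq_sym.
case: (eqVneq (nbhd V z :&: W) (nbhd V v :&: W)) => Ezv.
  move: Hvw; rewrite -Ezv (tight_adj_same_out wZ zZ awz (ZA v vZ)) ?eqxx //.
    by rewrite adjC.
  by rewrite eq_sym.
by move: Ezv; rewrite (tight_adj_same_out vZ zZ avz (ZA w wZ)) ?eqxx // adjC.
Qed.

(* The unique non-neighbour y of v in A \ v is adjacent to no tight vertex. *)
Lemma tight_adj_pair_avoider v w : v \in tight -> w \in tight ->
  nbhd V v :&: W != nbhd V w :&: W -> adj v w ->
  exists y, [/\ y \in nbhd V u, y \notin tight & forall z, z \in tight -> ~~ adj y z].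
Proof.
move=> vZ wZ Hvw avw; have ZA z : z \in tight -> z \in A := subsetP tight_sub z.
have [y [yA yv navy]] := tight_nonadj_exists vZ.
have [vN _ _] := tightP vZ.
have yu : y != u.
  by apply: contraNneq navy => ->; rewrite adjC; move: vN; rewrite in_nbhd => /andP [].
have vw : v != w by apply: contraNneq Hvw => ->.
have nawy : ~~ adj w y.
  by apply: contra Hvw => awy; rewrite (tight_adj_same_out vZ wZ avw yA awy navy yv).
have yw : y != w by apply: contraNneq navy => ->.
have yZ : y \notin tight.
  apply: contraNN vw => yZ; apply/eqP.
  by apply: tight_nonadj_unique yZ (ZA v vZ) _ _ (ZA w wZ) _ _;
    rewrite 1?eq_sym // adjC.
exists y; split => // [|z zZ]; first exact: in_cnbhd_neq yA yu.
have avoid c : c \in tight -> ~~ adj c y -> y != c ->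
    nbhd V z :&: W != nbhd V c :&: W -> ~~ adj y z.
  move=> cZ ncy yc Hne; apply/negP => ayz.
  have acz : adj c z.
    apply: contraNT yZ => ncz.
    have zc : z != c by apply: contraNneq Hne => ->.
    by rewrite -(tight_nonadj_unique cZ (ZA z zZ) zc ncz yA yc ncy).
  by move: Hne; rewrite (tight_adj_same_out cZ zZ acz yA) ?eqxx // adjC.
case: (eqVneq (nbhd V z :&: W) (nbhd V v :&: W)) => Ezv; last exact: avoid vZ navy yv Ezv.
by apply: (avoid w wZ nawy yw); rewrite Ezv.
Qed.

Lemma deg_loss_cnbhd_avoider y : y \in nbhd V u -> y \notin tight ->
  (forall z, z \in tight -> ~~ adj y z) -> deg_loss V A <= (n - 3) * (n - 2) + 4.
Proof.
move=> yN yZ nyZ; have yA := nbhd_sub_cnbhd yN.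
have sZy : tight \subset A :\ y.
  apply/subsetP => z zZ; rewrite in_setD1 (subsetP tight_sub _ zZ) andbT.
  by apply: contraNneq yZ => <-.
have sNy : nbhd V y :&: A \subset (A :\ y) :\: tight.
  apply/subsetP => x; rewrite inE in_nbhd => /andP [/andP [_ ayx] xA].
  rewrite in_setD in_setD1 xA andbT; apply/andP; split.
    by apply: contraL ayx => /nyZ.
  by apply: contraTneq ayx => ->; rewrite adjxx.
have cAy : #|A :\ y| = n - 3.
  by have := cardsD1 y A; rewrite yA card_cnbhd_n3; clear -n10; lia.
have out2 : #|nbhd V y :&: W| <= 2.
  case: (leqP 4 (deg V y)) => dy.
    by have := nbhd_n3_out_le1 yN dy; move: (#|_ :&: _|) => a; lia.
  have : 0 < #|nbhd V y :&: A|.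
    apply/card_gt0P; exists u; rewrite inE in_nbhd uV setU11 adjC andbT.
    by move: yN; rewrite in_nbhd => /andP [].
  have := deg_setID G V A y; move: dy.
  by move: (deg V y) (#|_ :&: A|) (#|_ :&: W|) => a b c; lia.
have fy : deg V y + #|nbhd V y :&: W| + #|tight| <= n + 1.
  have := subset_leq_card sNy; rewrite cardsD (setIidPr sZy) cAy.
  have := subset_leq_card sZy; rewrite cAy; have := deg_setID G V A y; move: out2.
  by move: (deg V y) (#|_ :&: A|) (#|_ :&: W|) (#|tight|) => a b c d; lia.
have hs := sum_cnbhd_tight; rewrite (bigD1 y yA) /= (negbTE yZ) addn0 in hs.
have le : \sum_(x in A | x != y) (deg V x + #|nbhd V x :&: W|) <=
          \sum_(x in A | x != y) (n - 3 + (x \in tight)).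
  by apply: leq_sum => x /andP [xA _]; exact: deg_loss_cnbhd_vertex.
rewrite /deg_loss (bigD1 y yA) /=; move: fy hs le.
move: (\sum_(x in A | x != y) (deg V x + _)) (\sum_(x in A | x != y) (n - 3 + _)).
by move: (deg V y) (#|nbhd V y :&: W|) (#|tight|) => a b c d e; clear -n10; nia.
Qed.

(* Either all tight vertices share their neighbour b outside A, or two of them
   v, w do not: then there are at most two tight vertices if v, w are
   non-adjacent, and a vertex of A adjacent to no tight vertex otherwise. *)
Lemma exists_cheap_outside : W != set0 -> exists2 b, b \in W &
  deg_loss V A <= (n - 3) * (n - 2) + 2 * #|nbhd V b :&: A| + 2.
Proof.
move=> W0; have loss := deg_loss_cnbhd_n3.
suff [b bW Hb] : exists2 b, b \in W & #|tight| <= 2 * #|nbhd V b :&: A| + 2 \/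
    deg_loss V A <= (n - 3) * (n - 2) + 4 /\ 0 < #|nbhd V b :&: A|.
  exists b => //; move: Hb loss; move: (deg_loss V A) ((n - 3) * (n - 2)) => a m.
  by move: (#|_ :&: A|) (#|tight|) => c d; lia.
case: (boolP [forall v in tight, forall w in tight,
               nbhd V v :&: W == nbhd V w :&: W]) => Hall.
  case: (set_0Vmem tight) => [Z0 | [v vZ]].
    by case/set0Pn: W0 => b bW; exists b; rewrite // Z0 cards0; left.
  have [b Eb] := tight_out vZ.
  have : b \in nbhd V v :&: W by rewrite Eb set11.
  rewrite inE => /andP [_ bW]; exists b => //; left.
  suff : #|tight| <= #|nbhd V b :&: A| by move: (#|_ :&: A|) (#|tight|) => *; lia.
  apply: tight_common_out => // z zZ.
  move/forall_inP: Hall => /(_ z zZ) /forall_inP /(_ v vZ) /eqP; rewrite Eb => Ez.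
  have : b \in nbhd V z :&: W by rewrite Ez set11.
  by rewrite inE in_nbhd => /andP [/andP []].
move/forall_inPn: Hall => [v vZ /forall_inPn [w wZ Hvw]].
have [b Eb] := tight_out vZ.
have : b \in nbhd V v :&: W by rewrite Eb set11.
rewrite inE in_nbhd => /andP [/andP [_ avb] bW]; exists b => //.
case: (boolP (adj v w)) => avw.
  right; split.
    have [y [yN yZ nyZ]] := tight_adj_pair_avoider vZ wZ Hvw avw.
    exact: deg_loss_cnbhd_avoider yN yZ nyZ.
  apply/card_gt0P; exists v; have vA := subsetP tight_sub _ vZ.
  by rewrite inE in_nbhd (cnbhd_subP uV vA) adjC avb vA.
left; have := subset_leq_card (tight_nonadj_pair vZ wZ Hvw avw); rewrite cards2.
by move: (#|_ :&: A|) (#|tight|) (v != w); clear => a c [] /=; lia.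
Qed.

Lemma deg_loss_cnbhd_add_n3 : W != set0 ->
  exists2 b, b \in W & deg_loss V (b |: A) <= (n - 1) * (n - 2).
Proof.
move=> W0; have [b bW Hb] := exists_cheap_outside W0; exists b => //.
have : b \in W := bW; rewrite inE => /andP [bA bV].
have eW : V :\: (b |: A) = W :\ b by apply/setP => y; rewrite !inE negb_or andbA.
have outE x : x \in A -> #|nbhd V x :&: W| = adj x b + #|nbhd V x :&: (W :\ b)|.
  move=> xA; rewrite (cardsD1 b (nbhd V x :&: W)) inE in_nbhd bV bW andbT.
  by congr (_ + _); apply: eq_card => y; rewrite !inE; case: (y == b); rewrite ?andbF.
have lossE : deg_loss V A =
    \sum_(x in A) (deg V x + #|nbhd V x :&: (W :\ b)|) + #|nbhd V b :&: A|.
  rewrite (nbhdI_sub _ _ (cnbhd_sub G uV)) card_set_predE -big_split /=.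
  by apply: eq_bigr => x xA; rewrite outE // adjC addnA addnAC.
have degE : deg V b = #|nbhd V b :&: A| + #|nbhd V b :&: (W :\ b)|.
  rewrite (deg_setID G V A b); congr (_ + _).
  by apply: eq_card => y; rewrite !inE; case: (eqVneq y b) => [->|]; rewrite ?adjxx ?andbF.
have := Hd bV; rewrite /deg_loss big_setU1 //= eW; move: Hb; rewrite lossE; move: degE.
move: (deg V b) (#|nbhd V b :&: A|) (#|nbhd V b :&: (W :\ b)|).
by move: (\sum_(x in A) (deg V x + _)) => a c d e; clear -n10; nia.
Qed.

End MaxDegreeNminus3.

(* Maximum degree n - 4 on 2n - 7 vertices: the vertices outside N[u] can only
   reach degree n - 4 by using up the deficit of the vertices of N[u]. *)
Section MaxDegreeNminus4.
Variables (V : {set 'I_p}) (u : 'I_p).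
Hypotheses (uV : u \in V) (du : deg V u = n - 4) (cV : #|V| = 2 * n - 7).
Hypothesis Hd : forall x, x \in V -> deg V x <= n - 4.

Local Notation A := (cnbhd V u).
Local Notation W := (V :\: cnbhd V u).

Definition deficit x := n - 4 - deg V x.

Lemma card_cnbhd_n4 : #|A| = n - 3.
Proof. by rewrite (card_cnbhd HG) du; lia. Qed.

Lemma card_outside_n4 : #|W| = n - 4.
Proof. by rewrite cardsD (setIidPr (cnbhd_sub G uV)) card_cnbhd_n4 cV; lia. Qed.

Lemma nbhd_n4_out_le2 x : x \in A -> #|nbhd V x :&: W| <= 2.
Proof.
move=> xA; case: (eqVneq x u) => [-> | xu].
  by rewrite nbhdI_setD_cnbhd setDv set0D cards0.
have xN := in_cnbhd_neq xA xu.
case: (leqP 4 (deg V x)) => dx.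
  rewrite nbhdI_setD_cnbhd; have := card_private_nbhd uV xN dx; rewrite du.
  by move=> /(_ (leqnn _)); move: (#|_ :\: _ :\ _|) => a; lia.
have : 0 < #|nbhd V x :&: A|.
  apply/card_gt0P; exists u; rewrite inE in_nbhd uV setU11 adjC andbT.
  by move: xN; rewrite in_nbhd => /andP [].
have := deg_setID G V A x; move: dx.
by move: (deg V x) (#|_ :&: A|) (#|_ :&: W|) => a b c; lia.
Qed.

Lemma sum_cnbhd_deg_deficit :
  \sum_(x in A) deg V x + \sum_(x in A) deficit x = (n - 4) * (n - 3).
Proof.
rewrite -big_split /= -card_cnbhd_n4 mulnC -sum_nat_const; apply: eq_bigr => x xA.
by rewrite /deficit; have := Hd (cnbhd_subP uV xA); move: (deg V x) => a; lia.
Qed.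

Definition full := [set b in W | deg V b == n - 4].

Lemma sum_outside_deg : \sum_(x in W) deg V x <= (n - 5) * (n - 4) + #|full|.
Proof.
apply: (@leq_trans (\sum_(x in W) (n - 5 + (x \in full)))).
  apply: leq_sum => x xW; rewrite inE xW /=; have := Hd (subsetP (subsetDl V A) _ xW).
  by case: eqP => /=; move: (deg V x) => a; lia.
rewrite big_split /= sum_nat_const card_outside_n4 -card_set_predE mulnC leq_add2l.
by apply/subset_leq_card/subsetP => x; rewrite !inE => /and3P [_ ->].
Qed.

Lemma full_nbhd_cnbhd b : b \in full -> 0 < #|nbhd V b :&: A|.
Proof.
rewrite inE => /andP [bW /eqP db].
have : #|nbhd V b :&: W| < #|W|.
  apply: proper_card; apply/properP; split; first exact: subsetIr.
  by exists b; rewrite // inE (negbTE (notin_nbhd HG V b)).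
have := deg_setID G V A b; rewrite db card_outside_n4.
by move: (#|_ :&: A|) (#|_ :&: W|) => a c; lia.
Qed.

Definition full_low := [set b in full | [forall x in nbhd V b :&: A, deg V x <= 3]].

(* A vertex of A of degree at most 3 has at most 2 neighbours outside A and
   deficit at least 3. *)
Lemma card_full_low : #|full_low| <= \sum_(x in A | deg V x <= 3) deficit x.
Proof.
have sLF : full_low \subset full by apply/subsetP => b; rewrite inE => /andP [].
have sFW : full \subset W by apply/subsetP => b; rewrite inE => /andP [].
have sLV : full_low \subset V by rewrite (subset_trans sLF) // (subset_trans sFW) ?subsetDl.
apply: (@leq_trans (\sum_(b in full_low) #|nbhd V b :&: A|)).
  by rewrite -sum1_card; apply: leq_sum => b /(subsetP sLF) /full_nbhd_cnbhd.
rewrite (sum_card_nbhdI_sym G sLV (cnbhd_sub G uV)) [X in _ <= X]big_mkcondr /=.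
apply: leq_sum => x xA; case: (leqP (deg V x) 3) => dx.
  have : #|nbhd V x :&: full_low| <= #|nbhd V x :&: W|.
    exact/subset_leq_card/setIS/(subset_trans sLF).
  have := nbhd_n4_out_le2 xA; rewrite /deficit; move: dx.
  by move: (deg V x) (#|_ :&: full_low|) (#|_ :&: W|) => a b c; lia.
rewrite (_ : nbhd V x :&: full_low = set0) ?cards0 //.
apply/setP => b; rewrite [in RHS]inE; apply/negP; rewrite !inE => /and3P [/andP [_ axb] _].
move=> /forall_inP /(_ x); rewrite inE in_nbhd (cnbhd_subP uV xA) xA adjC axb /=.
by move=> /(_ isT); rewrite leqNgt dx.
Qed.

Definition high_nbr b := odflt u [pick x in nbhd V b :&: A | 4 <= deg V x].

(* card_private_nbhd at the full vertex b and its neighbour high_nbr b. *)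
Lemma high_nbrP b : b \in full :\: full_low ->
  [/\ high_nbr b \in nbhd V b :&: A, 4 <= deg V (high_nbr b) &
      n - 8 <= #|nbhd V b :&: A| + deficit (high_nbr b)].
Proof.
rewrite inE => /andP [bnL bF]; have := bF; rewrite inE => /andP [bW /eqP db].
have bV : b \in V by move: bW; rewrite inE => /andP [].
rewrite /high_nbr; case: pickP => [x /andP [xin dx] | none]; last first.
  move: bnL; rewrite inE bF /= => /forall_inPn [x xin dx].
  by move: (none x); rewrite xin /= ltnNge dx.
rewrite /= xin dx; split => //.
move: xin; rewrite inE in_nbhd => /andP [/andP [xV abx] xA].
have xNb : x \in nbhd V b by rewrite in_nbhd xV abx.
have := card_private_nbhd bV xNb dx; rewrite db => /(_ (leqnn _)).
have sNx : nbhd V x :&: A \subset (nbhd V b :&: A) :|: (nbhd V x :\: nbhd V b :\ b).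
  apply/subsetP => y; rewrite inE => /andP [yN yA].
  rewrite in_setU in_setI in_setD1 in_setD yA yN !andbT.
  case: (boolP (y \in nbhd V b)) => //= _; rewrite andbT.
  by apply: contraTneq bW => <-; rewrite inE yA.
have := subset_leq_card sNx; rewrite cardsU.
have := nbhd_n4_out_le2 xA; have := deg_setID G V A x; have := Hd xV; rewrite /deficit.
move: (deg V x) (#|nbhd V x :&: A|) (#|nbhd V x :&: W|) (#|nbhd V b :&: A|).
by move: (#|nbhd V x :\: _ :\ _|) (#|_ :&: (_ :\: _ :\ _)|); clear => *; lia.
Qed.

Lemma card_full_high :
  #|full :\: full_low| <= 12 + \sum_(x in A | ~~ (deg V x <= 3)) deficit x.
Proof.
set H := full :\: full_low.
have HW b : b \in H -> b \in W by rewrite !inE => /andP [_ /andP [/andP [-> ->]]].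
have lo : #|H| * (n - 8) <= \sum_(b in H) #|nbhd V b :&: A| + \sum_(b in H) deficit (high_nbr b).
  by rewrite -big_split /= -sum_nat_const; apply: leq_sum => b /high_nbrP [].
have hi1 : \sum_(b in H) #|nbhd V b :&: A| <= 2 * (n - 3).
  apply: (@leq_trans (\sum_(b in W) #|nbhd V b :&: A|)); first exact: leq_sum_subset.
  rewrite (sum_card_nbhdI_sym G (subsetDl V A) (cnbhd_sub G uV)) -card_cnbhd_n4.
  by apply: sum_leq_const => x; exact: nbhd_n4_out_le2.
have hi2 : \sum_(b in H) deficit (high_nbr b) <=
           2 * \sum_(x in A | ~~ (deg V x <= 3)) deficit x.
  rewrite (partition_big high_nbr (fun x => (x \in A) && ~~ (deg V x <= 3))) /=; last first.
    by move=> b /high_nbrP [/setIP [_ ->] + _]; rewrite -ltnNge.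
  rewrite big_distrr /=; apply: leq_sum => x /andP [xA _].
  apply: (@leq_trans (\sum_(b in nbhd V x :&: W) deficit x)).
    apply: leq_sum_subset => b /andP [bH /eqP hb]; last by rewrite hb.
    case: (high_nbrP bH); rewrite hb => /setIP [xNb _] _ _.
    have bW := HW b bH; have : b \in V by move: bW; rewrite inE => /andP [].
    by rewrite inE in_nbhd bW andbT adjC => ->; move: xNb; rewrite in_nbhd => /andP [].
  by rewrite sum_nat_const leq_mul // nbhd_n4_out_le2.
move: lo hi1 hi2 n10; move: #|H| (\sum_(b in H) #|_|) (\sum_(b in H) deficit _).
by move: (\sum_(x in A | _) _); clear => *; nia.
Qed.

Lemma card_full : #|full| <= 12 + \sum_(x in A) deficit x.
Proof.
rewrite (bigID (fun x => deg V x <= 3)) /= -(cardsID full_low full).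
have -> : full :&: full_low = full_low.
  by apply/setIidPr/subsetP => b; rewrite inE => /andP [].
have := card_full_low; have := card_full_high.
move: #|full_low| #|full :\: full_low| (\sum_(x in A | deg V x <= 3) _).
by move: (\sum_(x in A | ~~ _) _); clear => *; lia.
Qed.

Lemma deg_sum_bound_maxdeg_n4 : deg_sum_bound V.
Proof.
rewrite /deg_sum_bound (big_setID A) /= (setIidPr (cnbhd_sub G uV)).
have := sum_cnbhd_deg_deficit; have := sum_outside_deg; have := card_full; rewrite cV.
move: (\sum_(x in A) deg V x) (\sum_(x in A) deficit x) (\sum_(x in W) deg V x) #|full|.
by move=> *; nia.
Qed.

End MaxDegreeNminus4.

Lemma deg_sum_bound_T3free k V : #|V| = k * (n - 1) + (n - 6) -> deg_sum_bound V.
Proof.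
elim: k V => [|k IH] V cV; first by apply: deg_sum_bound_small; rewrite cV.
have V0 : 0 < #|V| by rewrite cV ltn_addl // subn_gt0; lia.
have [u uV Eu] := eq_bigmax_cond (deg V) V0.
have Hd x : x \in V -> deg V x <= deg V u by move=> xV; rewrite -Eu leq_bigmax_cond.
have cVS : #|V| = (k * (n - 1) + (n - 6)) + (n - 1) by rewrite cV mulSn; lia.
have remove S : S \subset V -> #|S| = n - 1 -> deg_loss V S <= (n - 1) * (n - 2) ->
    deg_sum_bound V.
  move=> sSV cS loss; apply: (deg_sum_bound_remove sSV cS loss).
  by apply: IH; rewrite cardsD (setIidPr sSV) cS cVS addnK.
case: (leqP (n - 1) (deg V u)) => [du | lt1]; first exact: deg_sum_bound_high_maxdeg uV du.
case: (eqVneq (deg V u) (n - 2)) => [du | ne2].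
  apply: (remove _ (cnbhd_sub G uV)); first by rewrite (card_cnbhd HG) du; lia.
  by apply: (deg_loss_cnbhd_n2 uV du) => x /Hd; rewrite du.
case: (eqVneq (deg V u) (n - 3)) => [du | ne3].
  have W0 : V :\: cnbhd V u != set0.
    rewrite -card_gt0 cardsD (setIidPr (cnbhd_sub G uV)) (card_cnbhd HG) du cVS.
    by rewrite subn_gt0 -addnA ltn_addl //; lia.
  have Hd3 x : x \in V -> deg V x <= n - 3 by rewrite -du; exact: Hd.
  have [b bW loss] := deg_loss_cnbhd_add_n3 uV du Hd3 W0.
  move: bW; rewrite inE => /andP [bA bV].
  apply: (remove (b |: cnbhd V u)) loss; first by rewrite subUset sub1set bV cnbhd_sub.
  by rewrite cardsU1 bA (card_cnbhd HG) du; lia.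
have Hd4 x : x \in V -> deg V x + 2 <= n - 2 by move/Hd; lia.
case: (eqVneq (deg V u) (n - 4)) => [du | ne4].
  case: k IH cV cVS => [|k] _ cV _; last first.
    by apply: (deg_sum_bound_of_maxdeg Hd4); rewrite cV; nia.
  by apply: (deg_sum_bound_maxdeg_n4 uV du) => [|x /Hd4]; rewrite ?cV; lia.
apply: (deg_sum_bound_of_maxdeg (d := 3)) => [x /Hd|]; first by lia.
by rewrite cV; nia.
Qed.

End T3Free.

Lemma card_le_ex p m (L : {set {set 'I_m}}) (G : {set {set 'I_p}}) :
  is_graph G -> ~~ contains G L -> #|G| <= ex p L.
Proof.
move=> HG LG; rewrite /ex.
pose P := fun G : {set {set 'I_p}} => is_graph G && ~~ contains G L.
by apply: (@leq_bigmax_cond _ P (fun G => #|G|) G); rewrite /P HG.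
Qed.

Lemma ex_attained p m (L : {set {set 'I_m}}) (G0 : {set {set 'I_p}}) :
  is_graph G0 -> ~~ contains G0 L ->
  exists2 G : {set {set 'I_p}}, is_graph G && ~~ contains G L & ex p L = #|G|.
Proof.
move=> HG0 LG0; set P := [pred G : {set {set 'I_p}} | is_graph G && ~~ contains G L].
have P0 : 0 < #|P| by apply/card_gt0P; exists G0; rewrite inE HG0.
have [G PG EG] := eq_bigmax_cond (fun G : {set {set 'I_p}} => #|G|) P0.
by exists G; [move: PG; rewrite inE | rewrite /ex -EG; apply: eq_bigl => G'; rewrite inE].
Qed.

(* Disjoint cliques on the consecutive blocks of m vertices (the last block may
   be shorter). *)
Definition block_graph p m : {set {set 'I_p}} :=
  [set e : {set 'I_p} | [exists x : 'I_p, exists y : 'I_p,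
     [&& x != y, x %/ m == y %/ m & e == [set x; y]]]].

Lemma block_graph_is_graph p m : is_graph (block_graph p m).
Proof.
apply/forall_inP => e; rewrite inE => /existsP [x /existsP [y /and3P [xy _ /eqP ->]]].
by rewrite cards2 xy.
Qed.

Lemma adj_block_graph p m (x y : 'I_p) :
  adj (block_graph p m) x y = (x != y) && (x %/ m == y %/ m).
Proof.
rewrite /adj inE; apply/idP/idP; last first.
  by case/andP => xy xm; apply/existsP; exists x; apply/existsP; exists y; rewrite xy xm eqxx.
case/existsP => a /existsP [b /and3P [ab /eqP abm /eqP E]].
have xy : x != y.
  apply: contra ab => /eqP xy; move: E; rewrite xy setUid => /setP E.
  by have := E a; have := E b; rewrite !inE !eqxx orbT => /eqP <- /eqP <-.
have bm z : z \in [set a; b] -> z %/ m = a %/ m by rewrite !inE => /orP [] /eqP ->.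
by rewrite xy (bm x) ?(bm y) -?E ?inE ?eqxx ?orbT.
Qed.

Lemma block_graph_T3free p n : 10 <= n -> ~~ contains (block_graph p (n - 1)) (T3 n).
Proof.
move=> n10; apply/negP => /existsP [f /andP [/injectiveP finj /forall_inP Hf]].
have i0lt : 0 < n by lia.
have i1lt : 1 < n by lia.
pose i0 := Ordinal i0lt; pose i1 := Ordinal i1lt.
have edge (i j : 'I_n) : T3edge n i j -> f i %/ (n - 1) = f j %/ (n - 1).
  move=> Tij; have iT : [set i; j] \in T3 n.
    by rewrite inE; apply/existsP; exists i; apply/existsP; exists j; rewrite eqxx Tij.
  have := Hf _ iT; rewrite imsetU1 imset_set1 => fij.
  by move: (fij : adj _ (f i) (f j)); rewrite adj_block_graph => /andP [_ /eqP].
have blk (j : 'I_n) : f j %/ (n - 1) = f i0 %/ (n - 1).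
  case: (posnP j) => [j0 | jpos]; first by congr (f _ %/ _); apply: val_inj.
  case: (leqP j (n - 4)) => jle; first by rewrite (edge i0 j) // /T3edge /= jpos jle.
  have e01 : f i0 %/ (n - 1) = f i1 %/ (n - 1) by apply: edge; rewrite /T3edge /=; lia.
  by rewrite e01 (edge i1 j) // /T3edge /=; have := ltn_ord j; lia.
have sub : f @: [set: 'I_n] \subset [set y : 'I_p | y %/ (n - 1) == f i0 %/ (n - 1)].
  by apply/subsetP => y /imsetP [j _ ->]; rewrite inE blk.
have := subset_leq_card sub; rewrite card_imset // cardsT card_ord.
have m0 : 0 < n - 1 by lia.
pose g (y : 'I_p) : 'I_(n - 1) := Ordinal (ltn_pmod y m0).
rewrite -(card_in_imset (f := g)); last first.
  move=> y1 y2; rewrite !inE => /eqP h1 /eqP h2 /(congr1 val) /= E.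
  by apply: val_inj; rewrite /= (divn_eq y1 (n - 1)) (divn_eq y2 (n - 1)) h1 h2 E.
by move=> /leq_trans /(_ (max_card _)); rewrite card_ord; lia.
Qed.

(* Blocks below k m are complete, and the last one has p - k m vertices. *)
Lemma deg_block_graph_ge p m k (x : 'I_p) : 0 < m -> k * m <= p -> p - k * m <= m ->
  (if x < k * m then m else p - k * m) <= (deg (block_graph p m) [set: 'I_p] x).+1.
Proof.
move=> m0 kmp last.
set B := [set y : 'I_p | y %/ m == x %/ m].
have -> : (deg (block_graph p m) [set: 'I_p] x).+1 = #|B|.
  rewrite (cardsD1 x B) inE eqxx /deg; congr _.+1; apply: eq_card => y.
  by rewrite !inE adj_block_graph eq_sym [_ == y %/ m]eq_sym.
set len := if x < k * m then m else p - k * m.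
have [lenp lenm] : (x %/ m) * m + len <= p /\ len <= m.
  rewrite /len; case: (ltnP x (k * m)) => xkm.
    have : x %/ m < k by rewrite ltn_divLR.
    by move: (x %/ m) => c; nia.
  have -> : x %/ m = k.
    rewrite -(subnKC xkm) divnMDl // divn_small ?addn0 //.
    by have := ltn_ord x; lia.
  by lia.
clearbody len.
pose g (j : 'I_len) : 'I_p := insubd x ((x %/ m) * m + j).
have gE (j : 'I_len) : val (g j) = (x %/ m) * m + j.
  by rewrite /g val_insubd ifT //; have := ltn_ord j; lia.
have ginj : injective g.
  by move=> j1 j2 /(congr1 val); rewrite !gE => /addnI /val_inj.
have : g @: [set: 'I_len] \subset B.
  apply/subsetP => y /imsetP [j _ ->]; have jm : j < m by have := ltn_ord j; lia.
  by rewrite inE gE divnMDl // (divn_small jm) addn0.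
by move/subset_leq_card; rewrite card_imset // cardsT card_ord.
Qed.

Lemma sum_deg_block_graph p n k : 10 <= n -> p = k * (n - 1) + (n - 6) ->
  (n - 2) * p - 5 * (n - 6) <= \sum_(x in [set: 'I_p]) deg (block_graph p (n - 1)) [set: 'I_p] x.
Proof.
move=> n10 Ep; set m := n - 1.
have m0 : 0 < m by rewrite /m; lia.
have kmp : k * m <= p by rewrite Ep leq_addr.
have lastE : p - k * m = n - 6 by rewrite Ep addKn.
have last : p - k * m <= m by rewrite lastE /m; lia.
pose L (i : nat) := if i < k * m then n - 2 else n - 7.
have hx (x : 'I_p) : L x <= deg (block_graph p m) [set: 'I_p] x.
  have := deg_block_graph_ge x m0 kmp last; rewrite /L lastE /m.
  by case: (x < _); move: (deg _ _ _) => d; lia.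
apply: (@leq_trans (\sum_(x in [set: 'I_p]) L x)); last exact: leq_sum.
rewrite (eq_bigl (fun x : 'I_p => true)) => [|x]; last by rewrite in_setT.
rewrite -(big_mkord xpredT L) (@big_cat_nat _ _ _ (k * m)) //=.
rewrite (eq_big_nat _ _ (F2 := fun _ => n - 2)); last first.
  by move=> i /andP [_ hi]; rewrite /L hi.
rewrite (eq_big_nat _ _ (F1 := L) (F2 := fun _ => n - 7)); last first.
  by move=> i /andP [+ _]; rewrite /L leqNgt => /negbTE ->.
rewrite !sum_nat_const_nat Ep /m !subn0 addKn.
by move: n10; clear; nia.
Qed.

Theorem theorem4p3 (p n k : nat) :
  1 <= k -> 10 <= n -> n <= p -> p = k * (n - 1) + n - 6 ->
  2 * ex p (T3 n) = (n - 2) * p - 5 * (n - 6).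
Proof.
move=> _ n10 _ Ep; have {}Ep : p = k * (n - 1) + (n - 6) by rewrite Ep addnBA //; lia.
have HB := block_graph_is_graph p (n - 1).
have TB := block_graph_T3free p n10.
have [G /andP [HG TG] exE] := ex_attained HB TB.
apply/eqP; rewrite eqn_leq; apply/andP; split.
  have := deg_sum_bound_T3free HG n10 TG (k := k) (V := [set: 'I_p]).
  rewrite cardsT card_ord => /(_ Ep).
  rewrite /deg_sum_bound cardsT card_ord (handshake HG) => bound.
  rewrite exE leq_subRL; first by rewrite addnC.
  by apply: leq_trans bound; rewrite leq_addl.
apply: leq_trans (sum_deg_block_graph n10 Ep) _.
by rewrite (handshake HB) leq_mul2l card_le_ex ?orbT.
Qed.
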